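(* For integers $n$ and $a$ with $n\ge a$, $$J\mathcal{G}_{n+a}^{(3)}J\mathcal{G}_{n-a}^{(3)}-\left[J\mathcal{G}_{n}^{(3)}\right]^{2}=\frac{1}{49}\Big\{2^{n+1}\left[\Theta Y_{n-a}(a)-2^{-a}Y_{n}(a)\Theta\right]-X_{a}\left[X_{a}\Xi-14X_{a+1}\Omega\right]\Big\}$$ and $$K\mathcal{G}_{n+a}^{(3)}K\mathcal{G}_{n-a}^{(3)}-\left[K\mathcal{G}_{n}^{(3)}\right]^{2}=2^{n}\left[\Theta Y^{*}_{n-a}(a)-2^{-a}Y^{*}_{n}(a)\Theta\right]-X_{a}\left[X_{a}\Xi^{*}-6X_{a+1}\Omega\right],$$ where $Y_{n}(a)=X_{n}(2^{a}\mathbf{A}+X_{a+2}\mathbf{A}-X_{a}\mathbf{B})-X_{n+1}(2^{a}\mathbf{B}+X_{a}\mathbf{A}-X_{a+1}\mathbf{B})$, $Y^{*}_{n}(a)=X_{n}(2^{a}\mathbf{C}+X_{a+2}\mathbf{C}-X_{a}\mathbf{D})-X_{n+1}(2^{a}\mathbf{D}+X_{a}\mathbf{C}-X_{a+1}\mathbf{D})$, $\Xi=\mathbf{A}^2+\mathbf{A}\mathbf{B}+\mathbf{B}^2$ and $\Xi^{*}=\mathbf{C}^2+\mathbf{C}\mathbf{D}+\mathbf{D}^2$.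
   Context: Fix real numbers $\lambda_1,\lambda_2,\lambda_3$. The algebra $\mathbb{H}_{\lambda_1,\lambda_2,\lambda_3}$ of 3-parameter generalized quaternions is the real associative algebra of elements $\psi_0+\psi_1\mathbf{e}_1+\psi_2\mathbf{e}_2+\psi_3\mathbf{e}_3$ ($\psi_i\in\mathbb{R}$) with $\mathbf{e}_1^2=-\lambda_1\lambda_2$, $\mathbf{e}_2^2=-\lambda_1\lambda_3$, $\mathbf{e}_3^2=-\lambda_2\lambda_3$, $\mathbf{e}_1\mathbf{e}_2=-\mathbf{e}_2\mathbf{e}_1=\lambda_1\mathbf{e}_3$, $\mathbf{e}_1\mathbf{e}_3=-\mathbf{e}_3\mathbf{e}_1=-\lambda_2\mathbf{e}_2$, $\mathbf{e}_2\mathbf{e}_3=-\mathbf{e}_3\mathbf{e}_2=\lambda_3\mathbf{e}_1$. The third-order Jacobsthal numbers satisfy $J_0^{(3)}=0$, $J_1^{(3)}=J_2^{(3)}=1$, $J_n^{(3)}=J_{n-1}^{(3)}+J_{n-2}^{(3)}+2J_{n-3}^{(3)}$; the modified third-order Jacobsthal numbers satisfy $K_0^{(3)}=3$, $K_1^{(3)}=1$, $K_2^{(3)}=3$, $K_n^{(3)}=K_{n-1}^{(3)}+K_{n-2}^{(3)}+2K_{n-3}^{(3)}$; both are extended to all integers $n$ by running the recurrence backwards (equivalently by the Binet formulas $J_n^{(3)}=\frac17[2^{n+1}+X_n-2X_{n+1}]$, $K_n^{(3)}=2^n+X_n+2X_{n+1}$). For all integers $n$ define $J\mathcal{G}_n^{(3)}=J_n^{(3)}+J_{n+1}^{(3)}\mathbf{e}_1+J_{n+2}^{(3)}\mathbf{e}_2+J_{n+3}^{(3)}\mathbf{e}_3$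 and $K\mathcal{G}_n^{(3)}=K_n^{(3)}+K_{n+1}^{(3)}\mathbf{e}_1+K_{n+2}^{(3)}\mathbf{e}_2+K_{n+3}^{(3)}\mathbf{e}_3$. Here $X_n=0,1,-1$ according as $n\equiv0,1,2\pmod 3$, $\Theta=1+2\mathbf{e}_1+4\mathbf{e}_2+8\mathbf{e}_3$, $\mathbf{A}=1+2\mathbf{e}_1-3\mathbf{e}_2+\mathbf{e}_3$, $\mathbf{B}=2-3\mathbf{e}_1+\mathbf{e}_2+2\mathbf{e}_3$, $\mathbf{C}=1-2\mathbf{e}_1+\mathbf{e}_2+\mathbf{e}_3$, $\mathbf{D}=-2+\mathbf{e}_1+\mathbf{e}_2-2\mathbf{e}_3$, and $\Omega=\lambda_3\mathbf{e}_1+\lambda_2\mathbf{e}_2+\lambda_1\mathbf{e}_3$. *)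

From Stdlib Require Import Reals ZArith.
Open Scope R_scope.

Record quat := mkQ { q0 : R; q1 : R; q2 : R; q3 : R }.

Definition qadd (p q : quat) : quat :=
  mkQ (q0 p + q0 q) (q1 p + q1 q) (q2 p + q2 q) (q3 p + q3 q).
Definition qscale (c : R) (p : quat) : quat :=
  mkQ (c * q0 p) (c * q1 p) (c * q2 p) (c * q3 p).
Definition qsub (p q : quat) : quat := qadd p (qscale (-1) q).

(* Multiplication determined bilinearly by
   e1^2=-l1 l2, e2^2=-l1 l3, e3^2=-l2 l3,
   e1e2=-e2e1=l1 e3, e1e3=-e3e1=-l2 e2, e2e3=-e3e2=l3 e1. *)
Definition qmul (l1 l2 l3 : R) (a b : quat) : quat :=
  mkQ (q0 a * q0 b - l1 * l2 * (q1 a * q1 b) - l1 * l3 * (q2 a * q2 b)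
         - l2 * l3 * (q3 a * q3 b))
      (q0 a * q1 b + q1 a * q0 b + l3 * (q2 a * q3 b - q3 a * q2 b))
      (q0 a * q2 b + q2 a * q0 b + l2 * (q3 a * q1 b - q1 a * q3 b))
      (q0 a * q3 b + q3 a * q0 b + l1 * (q1 a * q2 b - q2 a * q1 b)).

(* ---------- third-order recurrences t_n = t_{n-1}+t_{n-2}+2 t_{n-3},
   extended to all integers by running the recurrence backwards ---------- *)
Fixpoint fwd (x0 x1 x2 : R) (k : nat) : R :=
  match k with
  | O => x0
  | S k' => fwd x1 x2 (x2 + x1 + 2 * x0) k'
  end.
(* bwd x0 x1 x2 k = t_{-k}, using t_{m-1} = (t_{m+2} - t_{m+1} - t_m)/2 *)
Fixpoint bwd (x0 x1 x2 : R) (k : nat) : R :=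
  match k with
  | O => x0
  | S k' => bwd ((x2 - x1 - x0) / 2) x0 x1 k'
  end.
Definition seqZ (x0 x1 x2 : R) (n : Z) : R :=
  if (0 <=? n)%Z then fwd x0 x1 x2 (Z.to_nat n)
  else bwd x0 x1 x2 (Z.to_nat (- n)).

Definition Jac (n : Z) : R := seqZ 0 1 1 n.
Definition Kac (n : Z) : R := seqZ 3 1 3 n.

Definition Xs (n : Z) : R :=
  match (n mod 3)%Z with
  | 0%Z => 0
  | 1%Z => 1
  | _ => -1
  end.

Definition JG (n : Z) : quat :=
  mkQ (Jac n) (Jac (n + 1)) (Jac (n + 2)) (Jac (n + 3)).
Definition KG (n : Z) : quat :=
  mkQ (Kac n) (Kac (n + 1)) (Kac (n + 2)) (Kac (n + 3)).

Definition Theta : quat := mkQ 1 2 4 8.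
Definition QA : quat := mkQ 1 2 (-3) 1.
Definition QB : quat := mkQ 2 (-3) 1 2.
Definition QC : quat := mkQ 1 (-2) 1 1.
Definition QD : quat := mkQ (-2) 1 1 (-2).
Definition Omega (l1 l2 l3 : R) : quat := mkQ 0 l3 l2 l1.

Definition Ygen (P Q : quat) (n a : Z) : quat :=
  qsub
    (qscale (Xs n) (qsub (qadd (qscale (powerRZ 2 a) P) (qscale (Xs (a + 2)) P))
                         (qscale (Xs a) Q)))
    (qscale (Xs (n + 1)) (qsub (qadd (qscale (powerRZ 2 a) Q) (qscale (Xs a) P))
                               (qscale (Xs (a + 1)) Q))).
Definition Yf (n a : Z) : quat := Ygen QA QB n a.
Definition Ystar (n a : Z) : quat := Ygen QC QD n a.

Definition Xi (l1 l2 l3 : R) : quat :=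
  qadd (qadd (qmul l1 l2 l3 QA QA) (qmul l1 l2 l3 QA QB)) (qmul l1 l2 l3 QB QB).
Definition Xistar (l1 l2 l3 : R) : quat :=
  qadd (qadd (qmul l1 l2 l3 QC QC) (qmul l1 l2 l3 QC QD)) (qmul l1 l2 l3 QD QD).

From Stdlib Require Import Reals ZArith Lia Lra.
Open Scope R_scope.

(* The Binet formulas write each quaternion sequence as a geometric part plus a
   3-periodic part: 7 JG_m = 2^(m+1) Theta + W_m with W_m = X_m A - X_(m+1) B, and
   KG_m = 2^m Theta + X_m C - X_(m+1) D.  In G_(n+a) G_(n-a) - G_n^2 the 4^n terms
   cancel; the cross terms regroup as Theta Y_(n-a)(a) - 2^(-a) Y_n(a) Theta because
   the addition formula for X gives Y_m(a) = 2^a W_m - W_(m+a); and Catalan-type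
   identities for X reduce the periodic part to
   -X_a (X_a (P^2 + PQ + Q^2) + X_(a+1) (PQ - QP)), independently of n.  Finally
   AB - BA = -14 Omega and CD - DC = -6 Omega. *)

Lemma quat_ext (p q : quat) :
  q0 p = q0 q -> q1 p = q1 q -> q2 p = q2 q -> q3 p = q3 q -> p = q.
Proof. destruct p, q; cbn; intros; subst; reflexivity. Qed.

Ltac quat_compute :=
  apply quat_ext; cbn [q0 q1 q2 q3 qadd qsub qscale qmul Theta QA QB QC QD Omega].

Lemma Z_mod3_cases (n : Z) : (n mod 3 = 0 \/ n mod 3 = 1 \/ n mod 3 = 2)%Z.
Proof. pose proof (Z.mod_pos_bound n 3). lia. Qed.

Lemma Xs_mod0 (n : Z) : (n mod 3 = 0)%Z -> Xs n = 0.
Proof. unfold Xs; intros ->; reflexivity. Qed.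

Lemma Xs_mod1 (n : Z) : (n mod 3 = 1)%Z -> Xs n = 1.
Proof. unfold Xs; intros ->; reflexivity. Qed.

Lemma Xs_mod2 (n : Z) : (n mod 3 = 2)%Z -> Xs n = -1.
Proof. unfold Xs; intros ->; reflexivity. Qed.

Ltac Xs_eval :=
  repeat match goal with
  | |- context [Xs ?e] =>
      first [ rewrite (Xs_mod0 e) by (Z.to_euclidean_division_equations; lia)
            | rewrite (Xs_mod1 e) by (Z.to_euclidean_division_equations; lia)
            | rewrite (Xs_mod2 e) by (Z.to_euclidean_division_equations; lia) ]
  end.

Ltac Xs_cases n := destruct (Z_mod3_cases n) as [? | [? | ?]].

Lemma Xs_add (m a : Z) : Xs (m + a) = Xs (m + 1) * Xs a - Xs m * Xs (a + 2).
Proof. Xs_cases m; Xs_cases a; Xs_eval; ring. Qed.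

Lemma Xs_add_succ (m a : Z) : Xs (m + a + 1) = Xs (m + 1) * Xs (a + 1) - Xs m * Xs a.
Proof. Xs_cases m; Xs_cases a; Xs_eval; ring. Qed.

Lemma Xs_catalan (n a : Z) : Xs (n + a) * Xs (n - a) - Xs n * Xs n = - (Xs a * Xs a).
Proof. Xs_cases n; Xs_cases a; Xs_eval; ring. Qed.

Lemma Xs_catalan_succr (n a : Z) :
  Xs (n + a) * Xs (n - a + 1) - Xs n * Xs (n + 1) = Xs a * Xs a + Xs a * Xs (a + 1).
Proof. Xs_cases n; Xs_cases a; Xs_eval; ring. Qed.

Lemma Xs_catalan_succl (n a : Z) :
  Xs (n + a + 1) * Xs (n - a) - Xs (n + 1) * Xs n = - (Xs a * Xs (a + 1)).
Proof. Xs_cases n; Xs_cases a; Xs_eval; ring. Qed.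

Section RecurrenceOnZ.

Variable g : Z -> R.
Hypothesis g_rec : forall m, g (m + 3) = g (m + 2) + g (m + 1) + 2 * g m.

Lemma fwd_of_rec (k : nat) (m : Z) :
  fwd (g m) (g (m + 1)) (g (m + 2)) k = g (m + Z.of_nat k).
Proof.
  revert m; induction k as [|k IH]; intros m; cbn [fwd].
  - now rewrite Z.add_0_r.
  - rewrite <- g_rec.
    replace (m + 2)%Z with (m + 1 + 1)%Z by lia.
    replace (m + 3)%Z with (m + 1 + 2)%Z by lia.
    rewrite IH; f_equal; lia.
Qed.

Lemma bwd_of_rec (k : nat) (m : Z) :
  bwd (g m) (g (m + 1)) (g (m + 2)) k = g (m - Z.of_nat k).
Proof.
  revert m; induction k as [|k IH]; intros m; cbn [bwd].
  - now rewrite Z.sub_0_r.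
  - assert (g_pred : (g (m + 2) - g (m + 1) - g m) / 2 = g (m - 1)).
    { pose proof (g_rec (m - 1)) as H.
      replace (m - 1 + 3)%Z with (m + 2)%Z in H by lia.
      replace (m - 1 + 2)%Z with (m + 1)%Z in H by lia.
      replace (m - 1 + 1)%Z with m in H by lia.
      rewrite H; field. }
    rewrite g_pred.
    replace m with (m - 1 + 1)%Z at 2 by lia.
    replace (m + 1)%Z with (m - 1 + 2)%Z by lia.
    rewrite IH; f_equal; lia.
Qed.

Lemma seqZ_of_rec (n : Z) : seqZ (g 0) (g 1) (g 2) n = g n.
Proof.
  unfold seqZ; destruct (0 <=? n)%Z eqn:Hn.
  - rewrite (fwd_of_rec _ 0); f_equal; apply Z.leb_le in Hn; lia.
  - rewrite (bwd_of_rec _ 0); f_equal; apply Z.leb_gt in Hn; lia.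
Qed.

End RecurrenceOnZ.

Lemma pow2_add (m k : Z) : powerRZ 2 (m + k) = powerRZ 2 m * powerRZ 2 k.
Proof. apply powerRZ_add; lra. Qed.

Definition binet (c d e : R) (m : Z) : R :=
  c * powerRZ 2 m + d * Xs m + e * Xs (m + 1).

Lemma binet_rec (c d e : R) (m : Z) :
  binet c d e (m + 3) = binet c d e (m + 2) + binet c d e (m + 1) + 2 * binet c d e m.
Proof. unfold binet; rewrite !pow2_add; simpl powerRZ; Xs_cases m; Xs_eval; ring. Qed.

Lemma seqZ_binet (c d e : R) (n : Z) :
  seqZ (binet c d e 0) (binet c d e 1) (binet c d e 2) n = binet c d e n.
Proof. exact (seqZ_of_rec _ (binet_rec c d e) n). Qed.

Lemma Jac_binet (n : Z) : Jac n = binet (2 / 7) (1 / 7) (- 2 / 7) n.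
Proof.
  rewrite <- seqZ_binet; unfold Jac; f_equal; unfold binet; simpl powerRZ; Xs_eval; field.
Qed.

Lemma Kac_binet (n : Z) : Kac n = binet 1 1 2 n.
Proof.
  rewrite <- seqZ_binet; unfold Kac; f_equal; unfold binet; simpl powerRZ; Xs_eval; ring.
Qed.

Definition Xcomb (P Q : quat) (m : Z) : quat :=
  qsub (qscale (Xs m) P) (qscale (Xs (m + 1)) Q).

Lemma JG_binet (m : Z) :
  JG m = qscale (1 / 7) (qadd (qscale (powerRZ 2 m) (qscale 2 Theta)) (Xcomb QA QB m)).
Proof.
  unfold JG, Xcomb; rewrite !Jac_binet; quat_compute;
    unfold binet; rewrite ?pow2_add; simpl powerRZ; Xs_cases m; Xs_eval; field.
Qed.

Lemma KG_binet (m : Z) :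
  KG m = qadd (qscale (powerRZ 2 m) Theta) (Xcomb QC QD m).
Proof.
  unfold KG, Xcomb; rewrite !Kac_binet; quat_compute;
    unfold binet; rewrite ?pow2_add; simpl powerRZ; Xs_cases m; Xs_eval; ring.
Qed.

Definition Yshift (W : Z -> quat) (a m : Z) : quat :=
  qsub (qscale (powerRZ 2 a) (W m)) (W (m + a)%Z).

Lemma Ygen_Yshift (P Q : quat) (m a : Z) : Ygen P Q m a = Yshift (Xcomb P Q) a m.
Proof.
  unfold Ygen, Yshift, Xcomb; quat_compute; rewrite (Xs_add m a), (Xs_add_succ m a); ring.
Qed.

Lemma catalan_pow2_split (l1 l2 l3 s : R) (T : quat) (W G : Z -> quat)
    (HG : forall m, G m = qscale s (qadd (qscale (powerRZ 2 m) T) (W m))) (n a : Z) :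
  qsub (qmul l1 l2 l3 (G (n + a)%Z) (G (n - a)%Z)) (qmul l1 l2 l3 (G n) (G n))
  = qscale (s * s)
      (qadd
        (qscale (powerRZ 2 n)
           (qsub (qmul l1 l2 l3 T (Yshift W a (n - a)))
                 (qscale (powerRZ 2 (- a)) (qmul l1 l2 l3 (Yshift W a n) T))))
        (qsub (qmul l1 l2 l3 (W (n + a)%Z) (W (n - a)%Z)) (qmul l1 l2 l3 (W n) (W n)))).
Proof.
  assert (pow2a_nz : powerRZ 2 a <> 0) by (apply powerRZ_NOR; lra).
  rewrite !HG; unfold Yshift; rewrite Z.sub_add.
  quat_compute; unfold Z.sub; rewrite !pow2_add, !powerRZ_neg'; field; exact pow2a_nz.
Qed.

Lemma qmul_comb_diff (l1 l2 l3 : R) (P Q : quat) (x y z w u v : R) :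
  qsub (qmul l1 l2 l3 (qsub (qscale x P) (qscale y Q)) (qsub (qscale z P) (qscale w Q)))
       (qmul l1 l2 l3 (qsub (qscale u P) (qscale v Q)) (qsub (qscale u P) (qscale v Q)))
  = qadd (qadd (qscale (x * z - u * u) (qmul l1 l2 l3 P P))
               (qscale (- (x * w - u * v)) (qmul l1 l2 l3 P Q)))
         (qadd (qscale (- (y * z - v * u)) (qmul l1 l2 l3 Q P))
               (qscale (y * w - v * v) (qmul l1 l2 l3 Q Q))).
Proof. quat_compute; ring. Qed.

Lemma Xcomb_catalan (l1 l2 l3 : R) (P Q : quat) (n a : Z) :
  qsub (qmul l1 l2 l3 (Xcomb P Q (n + a)) (Xcomb P Q (n - a)))
       (qmul l1 l2 l3 (Xcomb P Q n) (Xcomb P Q n))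
  = qscale (- Xs a)
      (qadd (qscale (Xs a)
               (qadd (qadd (qmul l1 l2 l3 P P) (qmul l1 l2 l3 P Q)) (qmul l1 l2 l3 Q Q)))
            (qscale (Xs (a + 1)) (qsub (qmul l1 l2 l3 P Q) (qmul l1 l2 l3 Q P)))).
Proof.
  assert (catalan_succ :
    Xs (n + a + 1) * Xs (n - a + 1) - Xs (n + 1) * Xs (n + 1) = - (Xs a * Xs a)).
  { rewrite <- (Xs_catalan (n + 1) a).
    now replace (n + 1 + a)%Z with (n + a + 1)%Z by lia;
        replace (n + 1 - a)%Z with (n - a + 1)%Z by lia. }
  unfold Xcomb; rewrite qmul_comb_diff, Xs_catalan, Xs_catalan_succr, Xs_catalan_succl,
    catalan_succ.
  quat_compute; ring.
Qed.

Lemma QA_QB_commutator (l1 l2 l3 : R) :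
  qsub (qmul l1 l2 l3 QA QB) (qmul l1 l2 l3 QB QA) = qscale (-14) (Omega l1 l2 l3).
Proof. quat_compute; ring. Qed.

Lemma QC_QD_commutator (l1 l2 l3 : R) :
  qsub (qmul l1 l2 l3 QC QD) (qmul l1 l2 l3 QD QC) = qscale (-6) (Omega l1 l2 l3).
Proof. quat_compute; ring. Qed.

Lemma JG_catalan (l1 l2 l3 : R) (n a : Z) :
  qsub (qmul l1 l2 l3 (JG (n + a)) (JG (n - a))) (qmul l1 l2 l3 (JG n) (JG n))
  = qscale (1 / 49)
      (qsub
        (qscale (powerRZ 2 (n + 1))
           (qsub (qmul l1 l2 l3 Theta (Yf (n - a) a))
                 (qscale (powerRZ 2 (- a)) (qmul l1 l2 l3 (Yf n a) Theta))))
        (qscale (Xs a)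
           (qsub (qscale (Xs a) (Xi l1 l2 l3))
                 (qscale (14 * Xs (a + 1)) (Omega l1 l2 l3))))).
Proof.
  rewrite (catalan_pow2_split l1 l2 l3 _ _ _ JG JG_binet), Xcomb_catalan, QA_QB_commutator.
  unfold Yf; rewrite !Ygen_Yshift; fold (Xi l1 l2 l3).
  set (Y1 := Yshift _ a (n - a)); set (Y2 := Yshift _ a n); set (Xi0 := Xi l1 l2 l3).
  quat_compute; rewrite pow2_add; simpl powerRZ; field.
Qed.

Lemma KG_catalan (l1 l2 l3 : R) (n a : Z) :
  qsub (qmul l1 l2 l3 (KG (n + a)) (KG (n - a))) (qmul l1 l2 l3 (KG n) (KG n))
  = qsub
      (qscale (powerRZ 2 n)
         (qsub (qmul l1 l2 l3 Theta (Ystar (n - a) a))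
               (qscale (powerRZ 2 (- a)) (qmul l1 l2 l3 (Ystar n a) Theta))))
      (qscale (Xs a)
         (qsub (qscale (Xs a) (Xistar l1 l2 l3))
               (qscale (6 * Xs (a + 1)) (Omega l1 l2 l3)))).
Proof.
  assert (KG_scaled : forall m,
    KG m = qscale 1 (qadd (qscale (powerRZ 2 m) Theta) (Xcomb QC QD m))).
  { intro m; rewrite KG_binet; quat_compute; ring. }
  rewrite (catalan_pow2_split l1 l2 l3 _ _ _ KG KG_scaled), Xcomb_catalan, QC_QD_commutator.
  unfold Ystar; rewrite !Ygen_Yshift; fold (Xistar l1 l2 l3).
  set (Y1 := Yshift _ a (n - a)); set (Y2 := Yshift _ a n); set (Xi0 := Xistar l1 l2 l3).
  quat_compute; ring.
Qed.

Theorem corollary3p2 (l1 l2 l3 : R) (n a : Z) (hna : (a <= n)%Z) :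
  qsub (qmul l1 l2 l3 (JG (n + a)) (JG (n - a))) (qmul l1 l2 l3 (JG n) (JG n))
  = qscale (1 / 49)
      (qsub
        (qscale (powerRZ 2 (n + 1))
           (qsub (qmul l1 l2 l3 Theta (Yf (n - a) a))
                 (qscale (powerRZ 2 (- a)) (qmul l1 l2 l3 (Yf n a) Theta))))
        (qscale (Xs a)
           (qsub (qscale (Xs a) (Xi l1 l2 l3))
                 (qscale (14 * Xs (a + 1)) (Omega l1 l2 l3)))))
  /\
  qsub (qmul l1 l2 l3 (KG (n + a)) (KG (n - a))) (qmul l1 l2 l3 (KG n) (KG n))
  = qsub
      (qscale (powerRZ 2 n)
         (qsub (qmul l1 l2 l3 Theta (Ystar (n - a) a))
               (qscale (powerRZ 2 (- a)) (qmul l1 l2 l3 (Ystar n a) Theta))))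
      (qscale (Xs a)
         (qsub (qscale (Xs a) (Xistar l1 l2 l3))
               (qscale (6 * Xs (a + 1)) (Omega l1 l2 l3)))).
Proof.
  split; [apply JG_catalan | apply KG_catalan].
Qed.
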